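(* Let $X=(x_{ij})_{2\le i,j\le n}$ be indeterminates and $I\subset\mathbb R[X]$ the ideal generated by all $x_{ij}-x_{ji}$ and all $x_{ij}x_{kl}+x_{ik}x_{jl}+x_{il}x_{jk}$ ($2\le i,j,k,l\le n$). Then modulo $I$: (i) $x_{aa}x_{ab}=0$ and $x_{ab_1}x_{ab_2}x_{ab_3}=0$ for all $a,b,b_1,b_2,b_3\in\{2,\dots,n\}$; (ii) $\det(x_{ij})_{2\le i,j\le n}=\frac{n!}{2^{n-1}}\,x_{22}x_{33}\cdots x_{nn}$; (iii) for all $i,j\ge0$, $E_i(x_{22},\dots,x_{nn})\,E_j(x_{22},\dots,x_{nn})=\binom{i+j}{i}E_{i+j}(x_{22},\dots,x_{nn})$, where $E_i$ denotes the $i$-th elementary symmetric polynomial. *)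

From HB Require Import structures.
From mathcomp Require Import all_boot all_order all_algebra.
Set Implicit Arguments. Unset Strict Implicit. Unset Printing Implicit Defensive.
Import Order.TTheory GRing.Theory Num.Theory.
Local Open Scope ring_scope.

Definition elem_sym (R : comPzRingType) (s : seq R) (k : nat) : R :=
  \sum_(S : {set 'I_(size s)} | #|S| == k) \prod_(i in S) s`_i.

Definition sym_rels (R : pzRingType) (n : nat) (x : nat -> nat -> R) : Prop :=
  (forall i j, 2 <= i <= n -> 2 <= j <= n -> x i j = x j i)%N /\
  (forall i j k l, (2 <= i <= n)%N -> (2 <= j <= n)%N ->
     (2 <= k <= n)%N -> (2 <= l <= n)%N ->
     x i j * x k l + x i k * x j l + x i l * x j k = 0).

Definition diagseq (R : Type) (n : nat) (x : nat -> nat -> R) : seq R :=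
  [seq x i i | i <- iota 2 n.-1].

From HB Require Import structures.
From mathcomp Require Import all_boot all_order all_algebra.
From mathcomp Require Import ring zify.
Set Implicit Arguments. Unset Strict Implicit. Unset Printing Implicit Defensive.
Import Order.TTheory GRing.Theory Num.Theory.
Local Open Scope ring_scope.

(* Polarizing the quartic relation at (a,a,a,b) gives 3 x_aa x_ab = 0, and at
   (a,a,b,c) it gives x_ab x_ac = -1/2 x_aa x_bc, so a product of three entries
   of one row has a factor x_aa x_ab; in particular the diagonal entries square
   to zero.  Then E_i E_j counts every (i+j)-subset once for each way of
   splitting it into an i-subset and a j-subset.  For the determinant, expand
   the leading minor D_{k+1} along its last row and column: the corner term is
   x_kk D_k and, by the second identity, each of the k bordering rows
   contributes 1/2 x_kk D_k, so D_{k+1} = (k+2)/2 x_kk D_k. *)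

Section ElemSymSquareZero.
Variables (R : comPzRingType) (s : seq R).
Hypothesis sqr0 : forall a : 'I_(size s), s`_a * s`_a = 0.

Lemma prod_mul_sqr0 (S T : {set 'I_(size s)}) :
  \prod_(a in S) s`_a * \prod_(a in T) s`_a =
  if [disjoint S & T] then \prod_(a in S :|: T) s`_a else 0.
Proof.
case: ifP => dST.
  by rewrite -bigU //; apply: eq_bigl => a; rewrite !inE.
have [STeq0|[a]] := set_0Vmem (S :&: T).
  by move: dST; rewrite -setI_eq0 STeq0 eqxx.
rewrite inE => /andP[aS aT].
by rewrite (big_setD1 a aS) (big_setD1 a aT) /= mulrACA sqr0 mul0r.
Qed.

Lemma prod_mul_elem_sym_sqr0 (S : {set 'I_(size s)}) j :
  \prod_(a in S) s`_a * elem_sym s j =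
  \sum_(U : {set 'I_(size s)} | (S \subset U) && (#|U| == #|S| + j))
     \prod_(a in U) s`_a.
Proof.
rewrite /elem_sym mulr_sumr.
rewrite (bigID (fun T : {set _} => [disjoint S & T])) /= [X in _ + X]big1 ?addr0;
  last by move=> T /andP[_ /negbTE nST]; rewrite prod_mul_sqr0 nST.
rewrite [RHS](reindex_onto (fun T => S :|: T) (fun U => U :\: S)) /=; last first.
  move=> U /andP[sSU _]; apply/setP => a; rewrite !inE.
  by case: (boolP (a \in S)) => //= aS; rewrite (subsetP sSU).
apply: eq_big => [T|T /andP[_ dST]]; last by rewrite prod_mul_sqr0 dST.
rewrite subsetUl /= setDUl setDv set0U.
case dST: [disjoint S & T].
  have -> : T :\: S = T by apply/setDidPl; rewrite disjoint_sym.
  by rewrite eqxx !andbT cardsU (disjoint_setI0 dST) cards0 subn0 eqn_add2l.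
rewrite andbF; apply/esym/negbTE/negP => /andP[_ /eqP TDS].
by rewrite disjoint_sym (introT setDidPl TDS) in dST.
Qed.

Lemma elem_sym_mul_sqr0 i j :
  elem_sym s i * elem_sym s j = 'C(i + j, i)%:R * elem_sym s (i + j).
Proof.
rewrite {1}/elem_sym mulr_suml.
under eq_bigr => S /eqP cardS do rewrite prod_mul_elem_sym_sqr0 cardS.
rewrite (exchange_big_dep (fun U : {set _} => #|U| == i + j)) /=;
  last by move=> S U _ /andP[].
rewrite /elem_sym mulr_sumr; apply: eq_bigr => U /eqP cardU.
rewrite (eq_bigl (mem [set S : {set 'I_(size s)} | S \subset U & #|S| == i]));
  last by move=> S; rewrite !inE cardU eqxx andbT andbC.
by rewrite sumr_const cards_draws cardU mulr_natl.
Qed.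

End ElemSymSquareZero.

Lemma bump_small h i : (i < h)%N -> bump h i = i.
Proof. by move=> ih; rewrite /bump leqNgt ih. Qed.

Section BorderedDeterminant.
Variables (R : comNzRingType) (k : nat) (M : 'M[R]_k.+1).
Let M' := row' ord_max (col' ord_max M).

Lemma cofactor_last_row j :
  cofactor M ord_max (lift ord_max j) =
  - \sum_(i < k) M (lift ord_max i) ord_max * cofactor M' i j.
Proof.
rewrite {}/M'; case: k M j => [|k'] N j; first by case: j.
rewrite {1}/cofactor (expand_det_col _ ord_max) mulr_sumr -sumrN.
apply: eq_bigr => i _; rewrite /cofactor !mxE.
have -> : N (lift ord_max i) (lift (lift ord_max j) ord_max) =
          N (lift ord_max i) ord_max.
  congr (N _ _); apply: val_inj => /=.
  by rewrite (bump_small (ltn_ord j)) /bump (ltn_ord j : (j <= k')%N).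
have -> : row' i (col' ord_max (row' ord_max (col' (lift ord_max j) N))) =
          row' i (col' j (row' ord_max (col' ord_max N))).
  apply/matrixP => a b; rewrite !mxE; congr (N _ _); apply: val_inj => /=.
  by rewrite (bump_small (ltn_ord j)) (bump_small (ltn_ord b))
             (bump_small (ltn_ord (lift j b))).
have sign : (-1) ^+ (k'.+1 + j) * (-1) ^+ (i + k') = - (-1) ^+ (i + j) :> R.
  rewrite -exprD -[RHS]mulN1r -exprS -signr_odd -[RHS]signr_odd; congr (_ ^+ _).
  by rewrite /= !oddD /=; case: (odd i); case: (odd j); case: (odd k').
by rewrite /= (bump_small (ltn_ord j)) mulrCA [X in _ * X]mulrA sign mulNr mulrN.
Qed.

Lemma det_bordered :
  \det M = M ord_max ord_max * \det M' -
    \sum_(i < k) \sum_(j < k)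
      M (lift ord_max i) ord_max * M ord_max (lift ord_max j) * cofactor M' i j.
Proof.
rewrite (expand_det_row _ ord_max) big_ord_recr /= addrC; congr (_ + _).
  by rewrite /cofactor addnn -signr_odd odd_double mul1r.
rewrite exchange_big -sumrN; apply: eq_bigr => j _.
have -> : widen_ord (leqnSn k) j = lift ord_max j by apply: val_inj; rewrite /= bump_small.
rewrite cofactor_last_row mulrN mulr_sumr; congr (- _).
by apply: eq_bigr => i _; rewrite mulrCA mulrA.
Qed.

End BorderedDeterminant.

Section SymmetricRelations.
Variables (F : numFieldType) (A : comAlgType F) (n : nat) (x : nat -> nat -> A).
Hypothesis hx : sym_rels n x.

Local Notation idx i := (2 <= i <= n)%N.

Lemma sym_rels_mul_row a b c : idx a -> idx b -> idx c ->
  x a b * x a c = - ((2^-1 : F) *: (x a a * x b c)).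
Proof.
move=> ha hb hc; have := hx.2 a a b c ha ha hb hc.
rewrite [x a c * x a b]mulrC -addrA -mulr2n addrC => /eqP; rewrite addr_eq0 => /eqP.
move=> /(congr1 (fun v => (2^-1 : F) *: v)); rewrite scalerN => <-.
by rewrite -scaler_nat scalerA mulVf ?pnatr_eq0 // scale1r.
Qed.

Lemma sym_rels_diag_mul a b : idx a -> idx b -> x a a * x a b = 0.
Proof.
move=> ha hb; have := hx.2 a a a b ha ha ha hb.
rewrite [x a b * x a a]mulrC.
have -> : x a a * x a b + x a a * x a b + x a a * x a b = (3%:R : F) *: (x a a * x a b).
  by rewrite scaler_nat !mulrS mulr0n addr0 addrA.
by move=> /eqP; rewrite scaler_eq0 pnatr_eq0 /= => /eqP.
Qed.

Lemma sym_rels_row_cube a b1 b2 b3 : idx a -> idx b1 -> idx b2 -> idx b3 ->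
  x a b1 * x a b2 * x a b3 = 0.
Proof.
move=> ha h1 h2 h3.
rewrite sym_rels_mul_row // mulNr -scalerAl -mulrA [x b1 b2 * _]mulrC mulrA.
by rewrite sym_rels_diag_mul // mul0r scaler0 oppr0.
Qed.

Lemma diagseq_sqr0 (a : 'I_(size (diagseq n x))) :
  (diagseq n x)`_a * (diagseq n x)`_a = 0.
Proof.
move: (nat_of_ord a) (ltn_ord a); rewrite size_map size_iota => i lt_i.
rewrite (nth_map 0%N) ?size_iota // nth_iota //.
by apply: sym_rels_diag_mul; lia.
Qed.

Definition lead_minor k := \det (\matrix_(i < k, j < k) x (i + 2)%N (j + 2)%N).

Lemma lead_minorS k : (k.+2 <= n)%N ->
  lead_minor k.+1 = ((k.+2)%:R / 2 : F) *: (x (k + 2)%N (k + 2)%N * lead_minor k).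
Proof.
move=> lt_kn; rewrite /lead_minor det_bordered !mxE.
set X := \matrix_(i < k, j < k) x (i + 2)%N (j + 2)%N.
set xkk := x (k + 2)%N (k + 2)%N.
have -> : row' ord_max (col' ord_max
    (\matrix_(i < k.+1, j < k.+1) x (i + 2)%N (j + 2)%N)) = X.
  by apply/matrixP => i j; rewrite !mxE /= !bump_small.
have border_mul (i j : 'I_k) :
    x (lift ord_max i + 2)%N (k + 2)%N * x (k + 2)%N (lift ord_max j + 2)%N =
    - ((2^-1 : F) *: (xkk * X i j)).
  have [lt_ik lt_jk] := (ltn_ord i, ltn_ord j).
  by rewrite /= !bump_small // mxE hx.1 ?sym_rels_mul_row //; lia.
under eq_bigr => i _ do under eq_bigr => j _ do rewrite !mxE border_mul.
have row_sum i : \sum_(j < k) - ((2^-1 : F) *: (xkk * X i j)) * cofactor X i j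
    = - ((2^-1 : F) *: (xkk * \det X)).
  rewrite (expand_det_row _ i) mulr_sumr scaler_sumr -sumrN.
  by apply: eq_bigr => j _; rewrite mulNr -scalerAl -mulrA.
under eq_bigr => i _ do rewrite row_sum.
rewrite sumrN opprK sumr_const card_ord -scaler_nat scalerA -{1}[xkk * _]scale1r.
rewrite -scalerDl; congr (_ *: _).
by rewrite -addn2 natrD; field.
Qed.

Lemma lead_minorE k : (k < n)%N ->
  lead_minor k = (((k.+1)`!)%:R / (2 ^ k)%:R : F) *: \prod_(i < k) x (i + 2)%N (i + 2)%N.
Proof.
elim: k => [|k IH] lt_kn; first by rewrite /lead_minor det_mx00 big_ord0 divr1 scale1r.
rewrite lead_minorS // IH 1?ltnW // big_ord_recr /= -scalerAr scalerA [x _ _ * _]mulrC.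
congr (_ *: _); rewrite [(k.+2)`!]factS expnS !natrM.
by field; rewrite pnatr_eq0 expn_eq0.
Qed.

End SymmetricRelations.

Theorem mainTheorem14 (F : realFieldType) (A : comAlgType F) (n : nat)
    (hn : (2 <= n)%N) (x : nat -> nat -> A) (hx : sym_rels n x) :
  (* (i) *)
  (forall a b, (2 <= a <= n)%N -> (2 <= b <= n)%N -> x a a * x a b = 0) /\
  (forall a b1 b2 b3, (2 <= a <= n)%N -> (2 <= b1 <= n)%N ->
     (2 <= b2 <= n)%N -> (2 <= b3 <= n)%N -> x a b1 * x a b2 * x a b3 = 0) /\
  (* (ii) *)
  \det (\matrix_(i < n.-1, j < n.-1) x (i + 2)%N (j + 2)%N)
    = ((n`!)%:R / (2 ^ n.-1)%:R : F) *: \prod_(2 <= i < n.+1) x i i /\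
  (* (iii) *)
  (forall i j : nat,
     elem_sym (diagseq n x) i * elem_sym (diagseq n x) j
       = 'C(i + j, i)%:R * elem_sym (diagseq n x) (i + j)).
Proof.
split; first exact: sym_rels_diag_mul hx.
split; first exact: sym_rels_row_cube hx.
split; last by move=> i j; apply: elem_sym_mul_sqr0; apply: diagseq_sqr0.
have lt_n1n : (n.-1 < n)%N by lia.
move: (lead_minorE hx lt_n1n); rewrite /lead_minor => ->.
rewrite prednK ?(ltnW hn) //; congr (_ *: _).
by rewrite (big_addn 0 n.+1 2) big_mkord subSS subn1.
Qed.
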